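(* Let $S \subseteq \mathbb{R}^n$ be nonempty, closed and convex, and let $F = (F_1,\dots,F_m)^\top\colon S \to\mathbb{R}^m$ with each $F_i$ convex. For $\ell > 0$ define $u_\ell(x) := \max_{y \in S}\min_{i=1,\dots,m}\{F_i(x) - F_i(y) - \frac{\ell}{2}\|x-y\|^2\}$, $x\in S$. Let $\ell>0$ and let $r$ be any scalar with $r \ge \ell$. Then \[ u_r(x) \le u_\ell(x) \le \frac{r}{\ell} u_r(x) \quad \text{for all } x \in S. \] *)

From HB Require Import structures.
From mathcomp Require Import all_boot all_order all_algebra.
From mathcomp Require Import all_classical all_reals all_analysis.
Set Implicit Arguments. Unset Strict Implicit. Unset Printing Implicit Defensive.
Import Order.TTheory GRing.Theory Num.Theory.
Local Open Scope classical_set_scope.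
Local Open Scope ring_scope.

Definition sqdist (R : realType) (n : nat) (x y : 'rV[R]_n) : R :=
  \sum_(i < n) (x ord0 i - y ord0 i) ^+ 2.

Definition convex_on (R : realType) (n : nat) (S : set 'rV[R]_n)
  (f : 'rV[R]_n -> R) : Prop :=
  forall x y (t : R), S x -> S y -> 0 <= t <= 1 ->
    f (t *: x + (1 - t) *: y) <= t * f x + (1 - t) * f y.

(* min_{i=1..m} g i  (for m > 0, the infimum of a finite nonempty set is its minimum) *)
Definition minI (R : realType) (m : nat) (g : 'I_m -> R) : R := inf (range g).

Definition u (R : realType) (n m : nat) (S : set 'rV[R]_n)
  (F : 'I_m -> 'rV[R]_n -> R) (l : R) (x : 'rV[R]_n) : R :=
  sup [set minI (fun i => F i x - F i y - l / 2 * sqdist x y) | y in S].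

From HB Require Import structures.
From mathcomp Require Import all_boot all_order all_algebra.
From mathcomp Require Import all_classical all_reals all_analysis.
From mathcomp Require Import ring lra.
Set Implicit Arguments. Unset Strict Implicit. Unset Printing Implicit Defensive.
Import Order.TTheory GRing.Theory Num.Theory numFieldNormedType.Exports.
Local Open Scope classical_set_scope.
Local Open Scope ring_scope.

(* Write phi_l(y) for the minimum over i defining u_l(x).  Since the penalty
   (l/2)|x - y|^2 grows with l, phi_r <= phi_l pointwise, whence u_r <= u_l.
   Conversely, for y in S put t = l/r in (0, 1] and z = t y + (1 - t) x in S.
   Convexity gives F_i x - F_i z >= t (F_i x - F_i y), and |x - z|^2 = t^2 |x - y|^2
   with r t^2 = l t, so t phi_l(y) <= phi_r(z) <= u_r(x); taking the sup over y
   gives l u_l(x) <= r u_r(x). *)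

Lemma minI_le (R : realType) (m : nat) (g : 'I_m -> R) (i : 'I_m) :
  minI g <= g i.
Proof.
rewrite /minI; apply: ge_inf; last by exists i.
exists (- \sum_(j < m) `|g j|) => _ [k _ <-].
rewrite lerNl (bigD1 k) //= -[X in X <= _]addr0.
apply: lerD; first by rewrite -normrN ler_norm.
by apply: sumr_ge0 => j _.
Qed.

Lemma le_minI (R : realType) (m : nat) (g : 'I_m -> R) (c : R) :
  (0 < m)%N -> (forall i, c <= g i) -> c <= minI g.
Proof.
move=> m_gt0 c_lb; apply: lb_le_inf.
  by exists (g (Ordinal m_gt0)), (Ordinal m_gt0).
by move=> _ [k _ <-].
Qed.

Lemma sqdist_ge0 (R : realType) (n : nat) (x y : 'rV[R]_n) : 0 <= sqdist x y.
Proof. by apply: sumr_ge0 => j _; rewrite sqr_ge0. Qed.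

Lemma sqdist_conv (R : realType) (n : nat) (x y : 'rV[R]_n) (t : R) :
  sqdist x (t *: y + (1 - t) *: x) = t ^+ 2 * sqdist x y.
Proof. by rewrite /sqdist mulr_sumr; apply: eq_bigr => j _; rewrite !mxE; ring. Qed.

Section ScaledDomination.
Variables (R : realType) (T : Type) (D : set T) (f g : T -> R) (c : R).
Hypotheses (c_ge0 : 0 <= c)
  (f_le_cg : forall y, D y -> exists2 z, D z & f y <= c * g z).

Lemma has_ubound_image_dominated :
  has_ubound (g @` D) -> has_ubound (f @` D).
Proof.
move=> [b gb]; exists (c * b) => _ [y Dy <-].
have [z Dz fyz] := f_le_cg Dy.
by apply: le_trans fyz _; rewrite ler_wpM2l // gb //; exists z.
Qed.

Lemma sup_image_dominated :
  D !=set0 -> has_ubound (g @` D) -> sup (f @` D) <= c * sup (g @` D).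
Proof.
move=> [y0 Dy0] g_ub; apply: ge_sup; first by exists (f y0), y0.
move=> _ [y Dy <-]; have [z Dz fyz] := f_le_cg Dy.
apply: le_trans fyz _; rewrite ler_wpM2l //.
by apply: sup_upper_bound; [split; [exists (g z), z | ] | exists z].
Qed.

End ScaledDomination.

Section MinGap.
Variables (R : realType) (n m : nat) (S : set 'rV[R]_n) (F : 'I_m -> 'rV[R]_n -> R).
Hypotheses (m_gt0 : (0 < m)%N) (S_convex : convex_set S)
  (F_convex : forall i, convex_on S (F i)).

Definition min_gap (l : R) (x y : 'rV[R]_n) : R :=
  minI (fun i => F i x - F i y - l / 2 * sqdist x y).

Lemma u_sup_min_gap (l : R) (x : 'rV[R]_n) :
  u S F l x = sup [set min_gap l x y | y in S].
Proof. by []. Qed.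

Lemma min_gap_antitone (l r : R) (x y : 'rV[R]_n) :
  l <= r -> min_gap r x y <= min_gap l x y.
Proof.
move=> lr; apply: le_minI => // i; apply: le_trans; first exact: minI_le.
rewrite lerD2l lerN2 ler_wpM2r ?sqdist_ge0 //.
by rewrite ler_pM2r.
Qed.

Lemma min_gap_conv (k t : R) (x y : 'rV[R]_n) :
  S x -> S y -> 0 <= t <= 1 ->
  t * min_gap (k * t) x y <= min_gap k x (t *: y + (1 - t) *: x).
Proof.
move=> Sx Sy t01; have [t_ge0 _] := andP t01; apply: le_minI => // i.
have Fz_le := @F_convex i y x t Sy Sx t01.
have := ler_wpM2l t_ge0 (minI_le (fun i => F i x - F i y - k * t / 2 * sqdist x y) i).
rewrite sqdist_conv; set d := sqdist x y; set Fz := F i _ in Fz_le *.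
have -> : k / 2 * (t ^+ 2 * d) = t * (k * t / 2 * d) by ring.
nra.
Qed.

Lemma min_gap_dominated (l r : R) (x y : 'rV[R]_n) :
  0 < l -> l <= r -> S x -> S y ->
  exists2 z, S z & min_gap l x y <= r / l * min_gap r x z.
Proof.
move=> l_gt0 lr Sx Sy; have r_gt0 := lt_le_trans l_gt0 lr.
set t := l / r; have t_ge0 : 0 <= t by rewrite divr_ge0 ?ltW.
have t_le1 : t <= 1 by rewrite ler_pdivrMr // mul1r.
have t01 : 0 <= t <= 1 by apply/andP.
exists (t *: y + (1 - t) *: x).
  by have := @S_convex y x (Itv01 t_ge0 t_le1); rewrite !inE; apply.
rewrite -ler_pdivrMl ?divr_gt0 // invf_div -/t.
have := min_gap_conv r Sx Sy t01.
by rewrite /t mulrCA divff ?gt_eqF ?mulr1.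
Qed.

End MinGap.

Theorem corollary4p3 (R : realType) (n m : nat) (hm : (0 < m)%N)
  (S : set 'rV[R]_n) (F : 'I_m -> 'rV[R]_n -> R)
  (hSne : S !=set0) (hScl : closed S) (hScv : convex_set S)
  (hF : forall i, convex_on S (F i))
  (l r : R) (hl : 0 < l) (hlr : l <= r) :
  forall x, S x -> u S F r x <= u S F l x <= r / l * u S F r x.
Proof.
move=> x Sx; rewrite !(u_sup_min_gap S).
have gap_r_le_l y : S y -> exists2 z, S z & min_gap F r x y <= 1 * min_gap F l x z.
  by move=> Sy; exists y; rewrite // mul1r min_gap_antitone.
have gap_l_le_r := min_gap_dominated hm hScv hF hl hlr Sx.
have [ub_r | nub_r] := pselect (has_ubound [set min_gap F r x y | y in S]).
  have c_ge0 : 0 <= r / l := divr_ge0 (ltW (lt_le_trans hl hlr)) (ltW hl).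
  have ub_l := has_ubound_image_dominated c_ge0 gap_l_le_r ub_r.
  rewrite sup_image_dominated // andbT.
  by rewrite -[leRHS]mul1r sup_image_dominated.
(* Otherwise both suprema take the junk value 0 of [sup] on unbounded sets. *)
have nub_l : ~ has_ubound [set min_gap F l x y | y in S].
  by move=> ub_l; apply/nub_r/(has_ubound_image_dominated _ gap_r_le_l).
by rewrite !sup_out ?mulr0 ?lexx // => -[].
Qed.
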